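(* Let $n\ge1$, $a_1,\dots,a_n,b\in\mathbb{Z}$, $m\in\mathbb{Z}$, $m\ne0$, and suppose the congruence $$a_1x_1+\dots+a_nx_n\equiv b\pmod m \qquad (1)$$ has at least one solution. Let $P_1=(a_1,\dots,a_n,m)\cdot|m|^{n-1}$ and $P_2=(a_1,m)\cdots(a_n,m)$. Then (1) has a base, and every base of (1) consists of exactly $P_1/P_2$ solutions (in particular $P_1/P_2$ is a positive integer, and all bases of (1) have the same number of elements).
   Context: $(c_1,\dots,c_k)$ denotes the positive greatest common divisor. A solution of (1) is a vector in $\mathbb{Z}^n$ satisfying (1); two solutions $X,Y$ are distinct if $X_i\not\equiv Y_i\pmod m$ for some $i$. For $i=1,\dots,n$ let $V_i\in\mathbb{Z}^n$ be the vector whose $i$-th coordinate is $\frac{m}{(a_i,m)}$ and whose other coordinates are $0$, and let $A\subseteq\mathbb{Z}^n$ be the $\mathbb{Z}$-module generated by $V_1,\dots,V_n$. Two solutions $X,Y$ of (1) are called independent if $X-Y\notin A$, and dependent otherwise. Solutions $X^1,\dots,X^s$ of (1) form a base of (1) if they are pairwise independent and every solution of (1) is congruent modulo $m$ (coordinatewise) to a vector of the form $X^j+\sum_{i=1}^n t_iV_i$ for some $j\in\{1,\dots,s\}$ and integers $t_i$ with $0\le t_i<(a_i,m)$. *)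

From HB Require Import structures.
From mathcomp Require Import all_boot all_order all_algebra.
Set Implicit Arguments. Unset Strict Implicit. Unset Printing Implicit Defensive.
Import Order.TTheory GRing.Theory Num.Theory.
Local Open Scope ring_scope.

Definition is_solution (n : nat) (a : 'I_n -> int) (b m : int) (X : 'I_n -> int) : Prop :=
  (\sum_(i < n) a i * X i = b %[mod m])%Z.

Definition Vvec (n : nat) (a : 'I_n -> int) (m : int) (i : 'I_n) : 'I_n -> int :=
  fun j => if i == j then (m %/ gcdz (a i) m)%Z else 0.

Definition inA (n : nat) (a : 'I_n -> int) (m : int) (v : 'I_n -> int) : Prop :=
  exists t : 'I_n -> int, forall j, v j = \sum_(i < n) t i * Vvec a m i j.

Definition independent (n : nat) (a : 'I_n -> int) (m : int) (X Y : 'I_n -> int) : Prop :=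
  ~ inA a m (fun j => X j - Y j).

Definition is_base (n : nat) (a : 'I_n -> int) (b m : int) (s : nat)
    (Xs : 'I_s -> ('I_n -> int)) : Prop :=
  [/\ forall k, is_solution a b m (Xs k),
      forall k l, k != l -> independent a m (Xs k) (Xs l) &
      forall Y, is_solution a b m Y ->
        exists k : 'I_s, exists t : 'I_n -> int,
          (forall i, 0 <= t i < gcdz (a i) m) /\
          forall j, (Y j = Xs k j + \sum_(i < n) t i * Vvec a m i j %[mod m])%Z].

Definition P1 (n : nat) (a : 'I_n -> int) (m : int) : int :=
  gcdz (\big[gcdz/0%Z]_(i < n) a i) m * `|m| ^+ n.-1.

Definition P2 (n : nat) (a : 'I_n -> int) (m : int) : int :=
  \prod_(i < n) gcdz (a i) m.

From HB Require Import structures.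
From mathcomp Require Import all_boot all_order all_algebra zify ring.
Import Order.TTheory GRing.Theory Num.Theory.
Set Implicit Arguments. Unset Strict Implicit. Unset Printing Implicit Defensive.
Local Open Scope ring_scope.

(* Put q_i = |m| / (a_i, m).  Two vectors are dependent iff they agree
   coordinatewise modulo the q_i, and m divides a_i q_i, so the left-hand side
   of the congruence modulo m only depends on the residue vector in
   prod_i Z/q_i.  A base is thus a set of representatives of the residue
   vectors solving the congruence, i.e. of one fibre of r |-> sum_i a_i r_i
   (mod m).  Nonempty fibres are translates of each other, and by Bezout they
   lie over exactly the |m|/d residues mod m divisible by
   d = (a_1, ..., a_n, m); each therefore has prod_i q_i / (|m|/d)
   = d |m|^(n-1) / prod_i (a_i, m) = P1/P2 elements. *)

Lemma biggcdz_dvd (I : finType) (F : I -> int) i : (\big[gcdz/0]_(j : I) F j %| F i)%Z.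
Proof.
have : i \in index_enum I by rewrite mem_index_enum.
elim: (index_enum I) => // j r IHr; rewrite inE big_cons => /orP[/eqP <-|/IHr].
  exact: dvdz_gcdl.
exact: dvdz_trans (dvdz_gcdr _ _).
Qed.

Lemma biggcdz_combination (I : finType) (F : I -> int) :
  exists u : I -> int, \big[gcdz/0]_(i : I) F i = \sum_(i : I) u i * F i.
Proof.
apply: (big_ind (fun x => exists u : I -> int, x = \sum_i u i * F i)).
- by exists (fun=> 0); rewrite big1 // => i _; rewrite mul0r.
- move=> _ _ [u ->] [w ->].
  have [v [v' <-]] := Bezoutz (\sum_i u i * F i) (\sum_i w i * F i).
  exists (fun i => v * u i + v' * w i); rewrite !mulr_sumr -big_split.
  by apply: eq_bigr => i _; rewrite mulrDl !mulrA.
- move=> i _; exists (fun j => (j == i)%:R).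
  by rewrite (bigD1 i) //= eqxx mul1r big1 ?addr0 // => j /negPf->; rewrite mul0r.
Qed.

Lemma sum_dvdn_ord (D M : nat) : (0 < M)%N -> (D %| M)%N ->
  (\sum_(j < M) (D %| j))%N = (M %/ D)%N.
Proof.
move=> M_gt0 dvdDM; rewrite divn_count_dvd big_nat_recr //= dvdDM.
rewrite -(big_mkord xpredT (fun j => nat_of_bool (D %| j)%N)) big_ltn //.
by rewrite dvdn0 addnC.
Qed.

Section LinearCongruence.

Variables (n : nat) (a : 'I_n -> int) (m : int).
Hypothesis m_neq0 : m != 0.

Definition lhs (X : 'I_n -> int) : int := \sum_(i < n) a i * X i.

Definition period (i : 'I_n) : nat := `|(m %/ gcdz (a i) m)%Z|%N.

Lemma period_mul_gcd i : (period i * `|gcdz (a i) m|)%N = `|m|%N.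
Proof. by rewrite /period -abszM divzK ?dvdz_gcdr. Qed.

Lemma period_gt0 i : (0 < period i)%N.
Proof.
move: (period_mul_gcd i); case: (period i) => //= /esym/eqP.
by rewrite absz_eq0 (negPf m_neq0).
Qed.

Lemma dvdz_coef_period i : (m %| a i * (period i)%:Z)%Z.
Proof. by rewrite dvdzE abszM absz_nat /period -abszM mulz_divCA_gcd abszM dvdn_mulr. Qed.

Lemma sum_Vvec (t : 'I_n -> int) j :
  \sum_(i < n) t i * Vvec a m i j = t j * (m %/ gcdz (a j) m)%Z.
Proof.
rewrite (bigD1 j) //= big1 ?addr0 => [|i /negPf ij]; rewrite /Vvec ?eqxx //.
by rewrite ij mulr0.
Qed.

Lemma inA_periodP (v : 'I_n -> int) : inA a m v <-> forall j, ((period j)%:Z %| v j)%Z.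
Proof.
split=> [[t Ht] j | dvd_v]; first by rewrite Ht sum_Vvec; apply: dvdz_mull; exact: dvdzz.
exists (fun j => (v j %/ (m %/ gcdz (a j) m)%Z)%Z) => j.
by rewrite sum_Vvec divzK ?dvd_v.
Qed.

Definition residue := {dffun forall i : 'I_n, 'I_(period i)}.

Lemma residue_lt (X : 'I_n -> int) i : (`|(X i %% period i)%Z| < period i)%N.
Proof.
have q0 : (period i)%:Z != 0 by rewrite eqz_nat -lt0n period_gt0.
have := modz_ge0 (X i) q0; have := ltz_mod (X i) q0; lia.
Qed.

Definition res (X : 'I_n -> int) : residue := [ffun i => Ordinal (residue_lt X i)].

Definition rep (f : residue) : 'I_n -> int := fun i => (f i : nat)%:Z.

Lemma rep_res (X : 'I_n -> int) i : rep (res X) i = (X i %% period i)%Z.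
Proof.
rewrite /rep ffunE /= gez0_abs // modz_ge0 // eqz_nat -lt0n period_gt0 //.
Qed.

Lemma res_rep (f : residue) : res (rep f) = f.
Proof.
apply/ffunP => i; apply/val_inj; rewrite ffunE /= modz_small ?absz_nat //.
by rewrite /rep !lez_nat ltz_nat ltn_ord.
Qed.

Lemma res_eqP (X Y : 'I_n -> int) :
  reflect (forall i, ((period i)%:Z %| X i - Y i)%Z) (res X == res Y).
Proof.
apply: (iffP eqP) => [eqXY i | dvdXY].
  by rewrite -eqz_mod_dvd -!rep_res eqXY.
apply/ffunP => i; apply/val_inj/eqP; rewrite -eqz_nat.
by rewrite -[_%:Z]/(rep _ i) -[X in _ == X]/(rep _ i) !rep_res eqz_mod_dvd.
Qed.

Lemma lhs_res_congr (X Y : 'I_n -> int) : res X = res Y -> (m %| lhs X - lhs Y)%Z.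
Proof.
move/eqP/res_eqP => dvdXY; rewrite /lhs -sumrB; apply: rpred_sum => i _.
rewrite -mulrBr; have /dvdzP[k ->] := dvdXY i; rewrite mulrA mulrAC.
exact/dvdz_mulr/dvdz_coef_period.
Qed.

Definition fibre (c : int) : {set residue} := [set f | (m %| lhs (rep f) - c)%Z].

Lemma res_in_fibre (X : 'I_n -> int) c : (res X \in fibre c) = (m %| lhs X - c)%Z.
Proof.
rewrite inE.
have -> : lhs (rep (res X)) - c = (lhs (rep (res X)) - lhs X) + (lhs X - c).
  by rewrite addrA subrK.
by rewrite rpredDl // lhs_res_congr ?res_rep.
Qed.

Lemma solution_fibre b (X : 'I_n -> int) : is_solution a b m X <-> res X \in fibre b.
Proof. by rewrite res_in_fibre -eqz_mod_dvd; split=> /eqP. Qed.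

Definition gcd_am : int := gcdz (\big[gcdz/0]_(i < n) a i) m.

Lemma fibre_neq0 c : (fibre c != set0) = (gcd_am %| c)%Z.
Proof.
apply/set0Pn/idP => [[f] | /dvdzP[k ->]].
  rewrite inE => dvd_mc.
  have dvd_lhs : (gcd_am %| lhs (rep f))%Z.
    apply: rpred_sum => i _; apply: dvdz_mulr.
    exact: dvdz_trans (dvdz_gcdl _ _) (biggcdz_dvd _ _).
  by rewrite -(rpredBl _ dvd_lhs) (dvdz_trans (dvdz_gcdr _ _) dvd_mc).
have [u gcd_a] := biggcdz_combination a.
have [v [w gcd_am_vw]] := Bezoutz (\big[gcdz/0]_(i < n) a i) m.
exists (res (fun i => k * v * u i)); rewrite res_in_fibre /gcd_am -gcd_am_vw.
have -> : lhs (fun i => k * v * u i) = k * v * \big[gcdz/0]_(i < n) a i.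
  by rewrite /lhs gcd_a mulr_sumr; apply: eq_bigr => i _; ring.
have -> : forall g : int, k * v * g - k * (v * g + w * m) = - (k * w) * m by move=> g; ring.
by rewrite dvdz_mull.
Qed.

Lemma card_fibre_le c c' :
  fibre c != set0 -> fibre c' != set0 -> (#|fibre c| <= #|fibre c'|)%N.
Proof.
move=> /set0Pn[f0 f0c] /set0Pn[f1 f1c'].
pose shift f := res (fun i => rep f i + (rep f1 i - rep f0 i)).
have shift_inj : injective shift.
  move=> f f' /eqP/res_eqP eq_ff'; rewrite -[f]res_rep -[f']res_rep.
  by apply/eqP/res_eqP => i; move: (eq_ff' i); rewrite opprD addrACA subrr addr0.
rewrite -(card_imset _ shift_inj); apply/subset_leq_card/subsetP => _ /imsetP[f fc ->].
move: f0c f1c' fc; rewrite res_in_fibre !inE => f0c f1c' fc.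
have -> : lhs (fun i => rep f i + (rep f1 i - rep f0 i)) =
    lhs (rep f) + lhs (rep f1) - lhs (rep f0).
  by rewrite /lhs -big_split -sumrB; apply: eq_bigr => i _ /=; ring.
have -> : forall x y z : int, x + y - z - c' = (x - c) + (y - c') - (z - c) by move=> *; ring.
exact: rpredB (rpredD fc f1c') f0c.
Qed.

Lemma card_fibre b c :
  fibre b != set0 -> #|fibre c| = ((gcd_am %| c)%Z * #|fibre b|)%N.
Proof.
move=> fb_neq0; have [dvd_c | ndvd_c] := boolP (gcd_am %| c)%Z.
  have fc_neq0 : fibre c != set0 by rewrite fibre_neq0.
  by rewrite mul1n; apply/eqP; rewrite eqn_leq !card_fibre_le.
by rewrite mul0n; apply/eqP; rewrite cards_eq0; move: ndvd_c; rewrite -fibre_neq0 negbK.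
Qed.

Lemma card_residue : #|{: residue}| = (\prod_(i < n) period i)%N.
Proof.
by rewrite card_dep_ffun foldrE big_image; apply: eq_bigr => i _; rewrite card_ord.
Qed.

Lemma lhs_mod_lt (X : 'I_n -> int) : (`|(lhs X %% m)%Z| < `|m|)%N.
Proof. have := modz_ge0 (lhs X) m_neq0; have := ltz_mod (lhs X) m_neq0; lia. Qed.

Lemma card_residue_fibres : #|{: residue}| = (\sum_(j < `|m|) #|fibre j|)%N.
Proof.
pose p (f : residue) : 'I_`|m| := Ordinal (lhs_mod_lt (rep f)).
rewrite -sum1_card (partition_big p xpredT) //=; apply: eq_bigr => j _.
rewrite sum1dep_card; apply: eq_card => f; rewrite !inE -eqz_mod_dvd -val_eqE /=.
rewrite -eqz_nat gez0_abs ?modz_ge0 // -[(j %% m)%Z]modz_abs [(j %% _)%Z]modz_small //= ltz_nat.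
exact: ltn_ord.
Qed.

Lemma card_fibre_prod_gcd b : (0 < n)%N -> fibre b != set0 ->
  (#|fibre b| * \prod_(i < n) `|gcdz (a i) m|)%N = (`|gcd_am| * `|m| ^ n.-1)%N.
Proof.
move=> n_gt0 fb_neq0.
(* Side conditions mentioning [gcd_am] are discharged explicitly: [//] would
   try to evaluate [\big[gcdz/0]] and does not terminate in reasonable time. *)
have M_gt0 : (0 < `|m|)%N by rewrite absz_gt0.
have dvdDM : (`|gcd_am| %| `|m|)%N by rewrite /gcd_am; apply: dvdz_gcdr.
have MD_gt0 : (0 < `|m| %/ `|gcd_am|)%N.
  by rewrite (divn_gt0 _ (dvdn_gt0 M_gt0 dvdDM)) (dvdn_leq M_gt0 dvdDM).
have prod_period : (\prod_(i < n) period i = #|fibre b| * (`|m| %/ `|gcd_am|))%N.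
  rewrite -card_residue card_residue_fibres.
  under eq_bigr do rewrite (card_fibre _ fb_neq0) dvdzE absz_nat.
  by rewrite -big_distrl /= (sum_dvdn_ord M_gt0 dvdDM) mulnC.
have prod_mul : (\prod_(i < n) period i * \prod_(i < n) `|gcdz (a i) m| = `|m| ^ n)%N.
  rewrite -big_split /= (eq_bigr (fun=> `|m|%N)) => [|i _]; last exact: period_mul_gcd.
  by rewrite prod_nat_const card_ord.
apply/eqP; rewrite -(eqn_pmul2r MD_gt0) mulnAC -prod_period prod_mul.
by rewrite mulnAC [(`|gcd_am| * _)%N]mulnC (divnK dvdDM) -expnS (prednK n_gt0).
Qed.

Lemma independent_res (X Y : 'I_n -> int) : independent a m X Y <-> res X != res Y.
Proof.
split=> [notA | /eqP neqXY /inA_periodP dvdXY].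
  by apply/eqP=> eqXY; apply/notA/inA_periodP/res_eqP/eqP.
exact/neqXY/eqP/res_eqP.
Qed.

Lemma res_eq_Vvec (X Y : 'I_n -> int) :
  res Y = res X <->
  exists t : 'I_n -> int, (forall i, 0 <= t i < gcdz (a i) m) /\
    forall j, (Y j = X j + \sum_(i < n) t i * Vvec a m i j %[mod m])%Z.
Proof.
split=> [/eqP/res_eqP dvdYX | [t [_ congrYX]]].
  pose w j := ((Y j - X j) %/ (m %/ gcdz (a j) m)%Z)%Z.
  exists (fun j => (w j %% gcdz (a j) m)%Z); split=> [i | j].
    have g_neq0 : gcdz (a i) m != 0 by rewrite gcdz_eq0 negb_and m_neq0 orbT.
    by rewrite modz_ge0 //= -[X in _ < X]gez0_abs ?ltz_mod.
  apply/eqP; rewrite eqz_mod_dvd sum_Vvec /=.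
  have wK : w j * (m %/ gcdz (a j) m)%Z = Y j - X j by rewrite /w divzK //; exact: dvdYX.
  have -> : Y j - (X j + (w j %% gcdz (a j) m)%Z * (m %/ gcdz (a j) m)%Z) =
      (w j %/ gcdz (a j) m)%Z * ((m %/ gcdz (a j) m)%Z * gcdz (a j) m).
    by rewrite opprD addrA -wK {1}(divz_eq (w j) (gcdz (a j) m)); ring.
  by rewrite divzK ?dvdz_gcdr // dvdz_mull.
apply/eqP/res_eqP => j.
have /eqP := congrYX j; rewrite eqz_mod_dvd sum_Vvec => dvd_m.
have dvd_period_m : ((period j)%:Z %| m)%Z.
  by rewrite dvdzE absz_nat -(period_mul_gcd j) dvdn_mulr.
have -> : Y j - X j = (Y j - (X j + t j * (m %/ gcdz (a j) m)%Z)) + t j * (m %/ gcdz (a j) m)%Z.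
  by rewrite opprD addrA subrK.
by apply: rpredD; [exact: dvdz_trans dvd_m | apply: dvdz_mull; exact: dvdzz].
Qed.

Lemma card_base b s (Xs : 'I_s -> 'I_n -> int) : is_base a b m Xs -> s = #|fibre b|.
Proof.
case=> sol indep cover.
have res_inj : injective (fun k => res (Xs k)).
  move=> k l eq_kl; apply/eqP; apply: contraT => /indep.
  by move/independent_res; rewrite eq_kl eqxx.
have <- : [set res (Xs k) | k in 'I_s] = fibre b.
  apply/setP => f; apply/imsetP/idP => [[k _ ->] | fb]; first exact/solution_fibre/sol.
  have [|k [t t_cover]] := cover (rep f); first by apply/solution_fibre; rewrite res_rep.
  by exists k => //; rewrite -[f]res_rep; apply/res_eq_Vvec; exists t.
by rewrite card_imset // card_ord.
Qed.

Lemma base_exists b : exists Xs : 'I_#|fibre b| -> 'I_n -> int, is_base a b m Xs.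
Proof.
exists (fun k => rep (enum_val k)); split=> [k | k l kl | Y /solution_fibre Yb].
- by apply/solution_fibre; rewrite res_rep enum_valP.
- by apply/independent_res; rewrite !res_rep (inj_eq enum_val_inj).
- exists (enum_rank_in Yb (res Y)); apply/res_eq_Vvec.
  by rewrite res_rep enum_rankK_in.
Qed.

Lemma P1_card_fibre b : (0 < n)%N -> fibre b != set0 -> P1 a m = #|fibre b|%:Z * P2 a m.
Proof.
move=> n_gt0 fb_neq0; have := congr1 Posz (card_fibre_prod_gcd n_gt0 fb_neq0).
have gcd_am_ge0 : 0 <= gcd_am by rewrite /gcd_am /gcdz.
rewrite !PoszM (big_morph Posz PoszM (erefl 1%:Z)) (gez0_abs gcd_am_ge0) -abszX abszE normrX.
by rewrite /P1 /P2 -/gcd_am => <-.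
Qed.

End LinearCongruence.

Theorem theorem4 (n : nat) (a : 'I_n -> int) (b m : int) :
  (0 < n)%N -> m != 0 ->
  (exists X : 'I_n -> int, is_solution a b m X) ->
  [/\ (P2 a m %| P1 a m)%Z,
      0 < (P1 a m %/ P2 a m)%Z,
      (exists s (Xs : 'I_s -> ('I_n -> int)), is_base a b m Xs) &
      forall s (Xs : 'I_s -> ('I_n -> int)), is_base a b m Xs ->
        (s%:Z = P1 a m %/ P2 a m)%Z].
Proof.
move=> n_gt0 m_neq0 [X0 solX0].
have fb_neq0 : fibre a m b != set0.
  by apply/set0Pn; exists (res a m_neq0 X0); exact/solution_fibre.
have P2_neq0 : P2 a m != 0.
  by rewrite prodf_seq_neq0; apply/allP => i _; rewrite gcdz_eq0 negb_and m_neq0 orbT.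
have P1E := P1_card_fibre m_neq0 n_gt0 fb_neq0.
have quotE : (P1 a m %/ P2 a m)%Z = #|fibre a m b| by rewrite P1E mulzK.
split.
- by rewrite P1E dvdz_mull.
- by rewrite quotE ltz_nat card_gt0.
- by have [Xs baseXs] := base_exists a m_neq0 b; exists #|fibre a m b|, Xs.
- by move=> s Xs /(card_base m_neq0) ->; rewrite quotE.
Qed.
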